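(* Let $n$ be an integer and $\mathbb F$ a field whose characteristic does not divide $2n$. Then the polynomial $S_{n-1}$ is separable over $\mathbb F$, and $(\Delta_n,S_{n-1})=(1)$ in $\mathbb F[\omega]$, where $\Delta_n=S_n'S_{n-1}-S_nS_{n-1}'$.
   Context: The Chebyshev polynomials $S_j(\omega)\in\mathbb Z[\omega]$ are defined for all integers $j$ by $S_0=1$, $S_1=\omega$, $S_{j+1}=\omega S_j-S_{j-1}$, and are considered over $\mathbb F$ by reduction; primes denote derivatives with respect to $\omega$. *)

From HB Require Import structures.
From mathcomp Require Import all_boot all_order all_algebra all_field.
Set Implicit Arguments. Unset Strict Implicit. Unset Printing Implicit Defensive.
Import GRing.Theory.
Local Open Scope ring_scope.

Fixpoint chebS_nat (R : nzRingType) (j : nat) : {poly R} :=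
  match j with
  | 0 => 1
  | 1 => 'X
  | (k.+1 as k1).+1 => 'X * chebS_nat R k1 - chebS_nat R k
  end.

(* Extension to all integers j using the recurrence backwards:
   S_{-1} = 0 and S_{-j} = - S_{j-2} for j >= 2.
   Negz k denotes -(k+1). *)
Definition chebS (R : nzRingType) (j : int) : {poly R} :=
  match j with
  | Posz k => chebS_nat R k
  | Negz 0 => 0
  | Negz k.+1 => - chebS_nat R k
  end.

Definition chebDelta (R : nzRingType) (n : int) : {poly R} :=
  (chebS R n)^`() * chebS R (n - 1) - chebS R n * (chebS R (n - 1))^`().

(* Two identities carry the argument: Cassini's
   [S_j^2 - S_(j+1) S_(j-1) = 1] and the differential equation
   [(4 - w^2) S_j' = 2(j+1) S_(j-1) - j w S_j]; each is proved on all of Z by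
   checking that its defect is shift-invariant, resp. satisfies the Chebyshev
   recurrence, and vanishes at the start.  Cassini makes consecutive [S_j]
   coprime; eliminating [S_(j-1)] from [2(j+1)] times Cassini by the
   differential equation gives a Bezout relation between [S_j] and [S_j']
   whose right-hand side is the unit [2(j+1)].  Modulo [S_(n-1)], [Delta_n]
   is [-S_n S_(n-1)'], a product of two factors coprime to [S_(n-1)]. *)
From HB Require Import structures.
From mathcomp Require Import all_boot all_order all_algebra all_field.
From mathcomp Require Import zify ring.
Local Open Scope ring_scope.
Import GRing.Theory.

Lemma int_ind_step (P : int -> Prop) :
  P 0 -> (forall j, P j -> P (j + 1)) -> (forall j, P j -> P (j - 1)) ->
  forall j, P j.
Proof.
move=> P0 Pfwd Pbwd; elim/int_rec => [//|k Pk|k Pk].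
- by rewrite intS addrC; apply: Pfwd.
- by rewrite -addn1 PoszD opprD; apply: Pbwd.
Qed.

Lemma rec2_eq0 (R : pzRingType) (a : R) (g : int -> R) :
  (forall j, g (j + 1) = a * g j - g (j - 1)) -> g (-1) = 0 -> g 0 = 0 ->
  forall j, g j = 0.
Proof.
move=> g_rec gN1 g0 j.
suff [] : g (j - 1) = 0 /\ g j = 0 by [].
elim/int_ind_step: j => [|j [gj1 gj]|j [gj1 gj]]; first by rewrite sub0r.
- by rewrite addrK g_rec gj gj1 mulr0 subr0.
- split=> //; have := g_rec (j - 1); rewrite subrK gj gj1 mulr0 sub0r.
  by move/eqP; rewrite eq_sym oppr_eq0 => /eqP.
Qed.

Lemma coprimepNr (R : idomainType) (p q : {poly R}) :
  coprimep p (- q) = coprimep p q.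
Proof.
by rewrite -scaleN1r; apply/eqp_coprimepr/eqp_scale; rewrite oppr_eq0 oner_eq0.
Qed.

Section ChebyshevIdentities.
Variable R : comNzRingType.
Local Notation S := (chebS R).

Lemma chebS_rec (j : int) : S (j + 1) = 'X * S j - S (j - 1).
Proof.
case: j => [[|[|k]]|[|[|k]]].
- by rewrite mulr1 subr0.
- by [].
- have -> : k.+2%:Z + 1 = k.+3%:Z by lia.
  by have -> : k.+2%:Z - 1 = k.+1%:Z by lia.
- by rewrite /= mulr0 sub0r opprK.
- by rewrite /= mulrN mulr1 opprK addNr.
- have -> : Negz k.+2 + 1 = Negz k.+1 by lia.
  have -> : Negz k.+2 - 1 = Negz k.+3 by lia.
  rewrite /=; ring.
Qed.

Lemma chebS_cassini (j : int) : S j ^+ 2 - S (j + 1) * S (j - 1) = 1.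
Proof.
have step k : S (k + 1) ^+ 2 - S (k + 1 + 1) * S (k + 1 - 1)
              = S k ^+ 2 - S (k + 1) * S (k - 1).
  have S_pred : S (k - 1) = 'X * S k - S (k + 1) by rewrite chebS_rec; ring.
  by rewrite (chebS_rec (k + 1)) addrK S_pred; ring.
elim/int_ind_step: j => [|k <-|k <-]; last by rewrite -step subrK.
- by rewrite add0r sub0r /= mulr0 subr0 expr1n.
- by rewrite step.
Qed.

Lemma chebS_deriv (j : int) :
  (4 - 'X ^+ 2) * (S j)^`() = (2 * (j + 1))%:~R * S (j - 1) - j%:~R * 'X * S j.
Proof.
pose g k := (4 - 'X ^+ 2) * (S k)^`() - (2 * (k + 1))%:~R * S (k - 1)
            + k%:~R * 'X * S k.
suff g0 : forall k, g k = 0.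
  by apply/eqP; rewrite -subr_eq0 opprB addrA addrAC -/(g j) g0.
apply: (@rec2_eq0 _ 'X) => [k||].
- have S_rec2 : S (k - 1 - 1) = 'X * S (k - 1) - S k.
    by have := chebS_rec (k - 1); rewrite subrK => ->; ring.
  rewrite /g addrK S_rec2 (chebS_rec k) !derivE /= !rmorphD /= !rmorphM /=.
  ring.
- by rewrite /g /= deriv0 !(mulr0, mul0r) subr0 addr0.
- by rewrite /g /= derivC !(mulr0, mul0r) subr0 addr0.
Qed.

Lemma chebS_bezout_deriv (j : int) :
  ((2 * (j + 1))%:~R * S j - j%:~R * 'X * S (j + 1)) * S j
  - S (j + 1) * ((4 - 'X ^+ 2) * (S j)^`()) = (2 * (j + 1))%:~R.
Proof.
by rewrite chebS_deriv -[RHS]mulr1 -(chebS_cassini j); ring.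
Qed.

End ChebyshevIdentities.

Section ChebyshevCoprimality.
Variable F : fieldType.
Local Notation S := (chebS F).

Lemma coprimep_chebS_pred (j : int) : coprimep (S (j - 1)) (S j).
Proof.
apply/Bezout_eq1_coprimepP; exists (S (j - 1), - S (j - 1 - 1)) => /=.
by rewrite -(chebS_cassini F (j - 1)) subrK; ring.
Qed.

Lemma chebS_separable (j : int) :
  ((2 * (j + 1))%:~R : F) != 0 -> separable_poly (S j).
Proof.
move=> c_neq0; rewrite unlock; apply/Bezout_coprimepP.
exists ((2 * (j + 1))%:~R * S j - j%:~R * 'X * S (j + 1),
        - (S (j + 1) * (4 - 'X ^+ 2))) => /=.
by rewrite mulNr -[S (j + 1) * _ * _]mulrA chebS_bezout_deriv -(rmorph_int (@polyC F)) polyC_eqp1.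
Qed.

End ChebyshevCoprimality.

Theorem lemma5p5 (F : fieldType) (n : int)
  (hchar : ((2 * n)%:~R : F) != 0) :
  separable_poly (chebS F (n - 1)) /\ coprimep (chebDelta F n) (chebS F (n - 1)).
Proof.
have sep : separable_poly (chebS F (n - 1)) by apply: chebS_separable; rewrite subrK.
split=> //; rewrite coprimep_sym /chebDelta coprimep_addl_mul -mulNr.
rewrite coprimepMr coprimepNr coprimep_chebS_pred /=.
by move: sep; rewrite unlock.
Qed.
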